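(* Let $\delta\ge0$ and define $f^\star_\delta(x,a)=I(\eta_a(x)>T^\star_{\delta,a})+\tau^\star_{\delta,a}I(\eta_a(x)=T^\star_{\delta,a})$ with $$\tau^\star_{\delta,1}=\rho\Big(\frac{\pi^\star_{0,+}-\pi^\star_{1,+}+\widetilde\delta}{\pi^\star_{1,=}}\Big),\qquad \tau^\star_{\delta,0}=\rho\Big(\frac{\pi^\star_{1,+}-\pi^\star_{0,+}-\widetilde\delta}{\pi^\star_{0,=}}\Big).$$ Then: if $D_-(0)>\delta$, $\mathrm{DDP}(f^\star_\delta)=\delta$; if $D_-(0)\le 0$, $\mathrm{DDP}(f^\star_\delta)=0$; and if $0<D_-(0)\le\delta$, $\mathrm{DDP}(f^\star_\delta)=D_-(0)$.
   Context: Let $(X,A,Y)$ be a random vector on $\mathbb{R}^d\times\{0,1\}\times\{0,1\}$ with law $P$; let $p_a=P(A=a)$ with $p_0,p_1>0$; let $P_{X|A=a}$ be the conditional law of $X$ given $A=a$; let $\eta_a(x)=P(Y=1\mid A=a,X=x)$. For a classifier $f:\mathbb{R}^d\times\{0,1\}\to[0,1]$, $\mathrm{DDP}(f)=\int f(x,1)\,dP_{X|A=1}(x)-\int f(x,0)\,dP_{X|A=0}(x)$. For $t\in\mathbb{R}$ define $D_-(t)=P_{X|A=1}\big(\eta_1(X)>\tfrac12+\tfrac{t}{2p_1}\big)-P_{X|A=0}\big(\eta_0(X)\ge\tfrac12-\tfrac{t}{2p_0}\big)$ and $D_+(t)=P_{X|A=1}\big(\eta_1(X)\ge\tfrac12+\tfrac{t}{2p_1}\big)-P_{X|A=0}\big(\eta_0(X)>\tfrac12-\tfrac{t}{2p_0}\big)$.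 For $\delta\ge 0$ let $t^\star_\delta=\inf\{t\in\mathbb{R}:D_-(t)<\delta\}$ if $D_-(0)>\delta$ and $t^\star_\delta=0$ otherwise; $T^\star_{\delta,1}=\tfrac12+\tfrac{t^\star_\delta}{2p_1}$, $T^\star_{\delta,0}=\tfrac12-\tfrac{t^\star_\delta}{2p_0}$. Standing assumption: $D_+(0)\ge -D_-(0)$. Let $\pi^\star_{a,+}=P_{X|A=a}(\eta_a(X)>T^\star_{\delta,a})$, $\pi^\star_{a,=}=P_{X|A=a}(\eta_a(X)=T^\star_{\delta,a})$, $\widetilde\delta=\delta\cdot I(D_-(0)>\delta)$, and $\rho:\mathbb{R}\to[0,1]$, $\rho(x)=0$ for $x\le0$, $\rho(x)=1$ for $x\ge1$, $\rho(x)=x$ otherwise. Convention: $x/0=0$ for all $x\in\mathbb{R}$. *)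

From HB Require Import structures.
From mathcomp Require Import all_boot all_order all_algebra.
From mathcomp Require Import all_classical all_reals all_analysis.
Set Implicit Arguments. Unset Strict Implicit. Unset Printing Implicit Defensive.
Import Order.TTheory GRing.Theory Num.Theory.
Import numFieldNormedType.Exports.
Local Open Scope classical_set_scope.
Local Open Scope ring_scope.

Definition Rd (R : realType) (d : nat) : measurableType _ :=
  g_sigma_algebraType (@open 'rV[R]_d).

Section FairDefs.
Context {dT : measure_display} {T : measurableType dT} {R : realType}.
(* Group index a \in {0,1} is encoded as a bool: true = 1, false = 0.
   mu a = P_{X|A=a},  eta a = eta_a,  p a = p_a = P(A = a). *)
Variables (mu : bool -> probability T R) (eta : bool -> T -> R) (p : bool -> R).

Definition prb (a : bool) (E : set T) : R := fine (mu a E).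

Definition Dminus (t : R) : R :=
  prb true [set x | 1/2 + t / (2 * p true) < eta true x]
  - prb false [set x | 1/2 - t / (2 * p false) <= eta false x].

Definition Dplus (t : R) : R :=
  prb true [set x | 1/2 + t / (2 * p true) <= eta true x]
  - prb false [set x | 1/2 - t / (2 * p false) < eta false x].

Definition tstar (delta : R) : R :=
  if delta < Dminus 0 then inf [set t | Dminus t < delta] else 0.

Definition Tstar (delta : R) (a : bool) : R :=
  if a then 1/2 + tstar delta / (2 * p true)
  else 1/2 - tstar delta / (2 * p false).

Definition pi_plus (delta : R) (a : bool) : R :=
  prb a [set x | Tstar delta a < eta a x].

Definition pi_eq (delta : R) (a : bool) : R :=
  prb a [set x | eta a x = Tstar delta a].

Definition delta_tilde (delta : R) : R :=
  if delta < Dminus 0 then delta else 0.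

(* rho(x) = 0 for x <= 0, 1 for x >= 1, x otherwise.
   Division uses MathComp's convention x / 0 = 0. *)
Definition rho (x : R) : R := Num.min (Num.max x 0) 1.

Definition tau_star (delta : R) (a : bool) : R :=
  if a then
    rho ((pi_plus delta false - pi_plus delta true + delta_tilde delta)
         / pi_eq delta true)
  else
    rho ((pi_plus delta true - pi_plus delta false - delta_tilde delta)
         / pi_eq delta false).

Definition f_star (delta : R) (x : T) (a : bool) : R :=
  (if Tstar delta a < eta a x then 1 else 0)
  + tau_star delta a * (if eta a x == Tstar delta a then 1 else 0).

Definition DDP (f : T -> bool -> R) : \bar R :=
  (\int[mu true]_x (f x true)%:E - \int[mu false]_x (f x false)%:E)%E.

End FairDefs.

(* DDP(f_star) = pi1+ + tau1 pi1= - (pi0+ + tau0 pi0=), and the weights rho(.)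
   take from the tie masses exactly what moves this value towards delta~: it
   equals delta~ clamped to [D_-(t_star), D_+(t_star)], the values obtained when
   no tie, resp. every tie, is accepted.  If delta < D_-(0), then
   t_star = inf {t | D_-(t) < delta}; as D_- is nonincreasing, right-continuous
   and has left limits D_+, this gives D_-(t_star) <= delta <= D_+(t_star).
   Otherwise t_star = 0 and delta~ = 0, and the standing assumption
   D_+(0) >= -D_-(0) puts 0 in the interval when D_-(0) <= 0. *)

From mathcomp Require Import all_boot all_order all_algebra.
From mathcomp Require Import all_classical all_reals all_analysis.
From mathcomp Require Import measurable_realfun.
From mathcomp Require Import lra.
Import Order.TTheory GRing.Theory Num.Theory.
Import numFieldNormedType.Exports.
Unset Printing Implicit Defensive.
Local Open Scope classical_set_scope.
Local Open Scope ring_scope.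

Section level_sets.
Context d (T : measurableType d) (R : realType) (f : T -> R).
Hypothesis mf : measurable_fun setT f.

Lemma measurable_setb (b : T -> bool) :
  measurable_fun setT b -> measurable [set x | b x].
Proof.
move=> mb.
have -> : [set x | b x] = setT `&` b @^-1` [set true] by rewrite setTI.
exact: mb.
Qed.

Lemma measurable_gtr c : measurable [set x | c < f x].
Proof. exact/measurable_setb/measurable_fun_ltr. Qed.

Lemma measurable_ger c : measurable [set x | c <= f x].
Proof. exact/measurable_setb/measurable_fun_ler. Qed.

Lemma measurable_eqr c : measurable [set x | f x = c].
Proof.
have -> : [set x | f x = c] = [set x | f x == c].
  by apply/seteqP; split=> x /= /eqP.
exact/measurable_setb/measurable_fun_eqr.
Qed.

End level_sets.

Section probability_of_level_sets.
Context d (T : measurableType d) (R : realType) (P : probability T R).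

Lemma fine_measure_le (A B : set T) :
  measurable A -> measurable B -> A `<=` B -> fine (P A) <= fine (P B).
Proof.
move=> mA mB AB.
apply: fine_le; [exact: fin_num_measure|exact: fin_num_measure|].
by apply: le_measure; rewrite ?inE.
Qed.

Lemma cvg_fine_measure_bigcup (S : (set T)^nat) :
  (forall n, measurable (S n)) -> measurable (\bigcup_n S n) ->
  nondecreasing_seq S ->
  fine (P (S n)) @[n --> \oo] --> fine (P (\bigcup_n S n)).
Proof.
move=> mS mU ndS; apply: (fine_cvg (f := P \o S)).
by rewrite fineK ?fin_num_measure //; apply: nondecreasing_cvg_mu.
Qed.

Lemma cvg_fine_measure_bigcap (S : (set T)^nat) :
  (forall n, measurable (S n)) -> measurable (\bigcap_n S n) ->
  nonincreasing_seq S ->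
  fine (P (S n)) @[n --> \oo] --> fine (P (\bigcap_n S n)).
Proof.
move=> mS mI niS; apply: (fine_cvg (f := P \o S)).
rewrite fineK ?fin_num_measure //; apply: nonincreasing_cvg_mu => //.
by rewrite ltey_eq fin_num_measure.
Qed.

Variable f : T -> R.
Hypothesis mf : measurable_fun setT f.

Lemma fine_measure_ger c : fine (P [set x | c <= f x]) =
  fine (P [set x | c < f x]) + fine (P [set x | f x = c]).
Proof.
have -> : [set x | c <= f x] = [set x | c < f x] `|` [set x | f x = c].
  apply/seteqP; split=> x /=; last by case=> [/ltW|->].
  by rewrite le_eqVlt => /orP[/eqP->|]; [right|left].
rewrite measureU ?fineD ?fin_num_measure //;
  [exact: measurable_gtr|exact: measurable_eqr|exact: measurable_gtr|
   exact: measurable_eqr|].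
by apply/seteqP; split=> x //= [+ fxc]; rewrite fxc ltxx.
Qed.

Variables (c e : R).
Hypothesis e_gt0 : 0 < e.

Let e_n_gt0 n : 0 < e / n.+1%:R.
Proof. by rewrite divr_gt0 // ltr0Sn. Qed.

Let e_n_nonincreasing :
  {homo (fun n : nat => e / n.+1%:R) : n m / (n <= m)%N >-> m <= n}.
Proof.
by move=> n m nm; rewrite ler_pM2l // lef_pV2 ?posrE ?ltr0Sn // ler_nat.
Qed.

Let e_n_lt y : 0 < y -> exists n : nat, e / n.+1%:R < y.
Proof.
move=> y0; exists (Num.truncn (e / y)).
by rewrite ltr_pdivrMr ?ltr0Sn // mulrC -ltr_pdivrMr // truncnS_gt.
Qed.

Lemma cvg_fine_measure_gtr_right :
  fine (P [set x | c + e / n.+1%:R < f x]) @[n --> \oo] -->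
  fine (P [set x | c < f x]).
Proof.
have U : \bigcup_n [set x | c + e / n.+1%:R < f x] = [set x | c < f x].
  apply/seteqP; split=> x /=.
    by case=> n _; apply: le_lt_trans; rewrite lerDl ltW.
  by rewrite -subr_gt0 => /e_n_lt[n ?]; exists n => //=; rewrite -ltrBrDl.
rewrite -U; apply: cvg_fine_measure_bigcup => [n||n m nm].
- exact: measurable_gtr.
- rewrite U; exact: measurable_gtr.
- apply/subsetPset => x /=.
  by apply: le_lt_trans; rewrite lerD2l e_n_nonincreasing.
Qed.

Lemma cvg_fine_measure_ger_left :
  fine (P [set x | c - e / n.+1%:R <= f x]) @[n --> \oo] -->
  fine (P [set x | c <= f x]).
Proof.
have I : \bigcap_n [set x | c - e / n.+1%:R <= f x] = [set x | c <= f x].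
  apply/seteqP; split=> x /=; last first.
    by move=> cfx n _ /=; apply: le_trans cfx; rewrite gerDl oppr_le0 ltW.
  move=> h; rewrite leNgt; apply/negP; rewrite -subr_gt0 => /e_n_lt[n].
  by rewrite ltrBrDl -ltrBrDr ltNge h.
rewrite -I; apply: cvg_fine_measure_bigcap => [n||n m nm].
- exact: measurable_ger.
- rewrite I; exact: measurable_ger.
- apply/subsetPset => x /=.
  by apply: le_trans; rewrite lerD2l lerN2 e_n_nonincreasing.
Qed.

Lemma cvg_fine_measure_gtr_left :
  fine (P [set x | c - e / n.+1%:R < f x]) @[n --> \oo] -->
  fine (P [set x | c <= f x]).
Proof.
apply: (squeeze_cvgr _ (cvg_cst _) cvg_fine_measure_ger_left).
apply: nearW => n; apply/andP; split; apply: fine_measure_le;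
  do ?[exact: measurable_ger|exact: measurable_gtr]; move=> x /=.
- by apply: lt_le_trans; rewrite gtrDl oppr_lt0.
- exact: ltW.
Qed.

Lemma cvg_fine_measure_ger_right :
  fine (P [set x | c + e / n.+1%:R <= f x]) @[n --> \oo] -->
  fine (P [set x | c < f x]).
Proof.
apply: (squeeze_cvgr _ cvg_fine_measure_gtr_right (cvg_cst _)).
apply: nearW => n; apply/andP; split; apply: fine_measure_le;
  do ?[exact: measurable_ger|exact: measurable_gtr]; move=> x /=.
- exact: ltW.
- by apply: lt_le_trans; rewrite ltrDl.
Qed.

End probability_of_level_sets.

Lemma integral_indicator_comb d (T : measurableType d) (R : realType)
    (P : probability T R) (b1 b2 : T -> bool) (k : R) :
  measurable [set x | b1 x] -> measurable [set x | b2 x] -> 0 <= k ->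
  (\int[P]_x ((if b1 x then 1 else 0) + k * (if b2 x then 1 else 0))%:E =
   (fine (P [set x | b1 x]) + k * fine (P [set x | b2 x]))%:E)%E.
Proof.
move=> m1 m2 k0.
have mem_setb (b : T -> bool) x : (x \in [set y | b y]) = b x.
  by apply/idP/idP => [/set_mem|/mem_set].
have ind (A : set T) x : (if x \in A then 1 else 0) = \1_A x :> R.
  by rewrite indicE; case: (_ \in _).
under eq_integral do rewrite -!mem_setb !ind EFinD EFinM.
have mI (A : set T) :
  measurable A -> measurable_fun setT (fun x => (\1_A x : R)%:E).
  by move=> mA; apply/measurable_EFinP; exact: measurable_indic.
have ind_ge0 (A : set T) x : (0 <= (\1_A x : R)%:E)%E.
  by rewrite lee_fin indicE; case: (_ \in _).
rewrite ge0_integralD //; last 3 first.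
- exact: mI.
- by move=> x _; rewrite mule_ge0.
- exact/measurable_funeM/mI.
rewrite ge0_integralZl //; last exact: mI.
by rewrite !integral_indic // !setIT EFinD EFinM !fineK ?fin_num_measure.
Qed.

Section rho.
Context (R : realType).
Implicit Types g E : R.

Lemma rho_ge0 (x : R) : 0 <= rho x.
Proof. by rewrite /rho le_min le_max lexx orbT ler01. Qed.

Lemma rho_div_le0 g E : g <= 0 -> 0 <= E -> rho (g / E) = 0.
Proof.
move=> g0 E0; have gE0 : g / E <= 0 by rewrite mulr_le0_ge0 // invr_ge0.
by rewrite /rho (max_r gE0) (min_l ler01).
Qed.

Lemma rho_divK g E : 0 <= g -> 0 <= E -> rho (g / E) * E = Num.min g E.
Proof.
move=> g0 E0; have [->|E_neq0] := eqVneq E 0; first by rewrite mulr0 min_r.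
have {E_neq0}E0 : 0 < E by rewrite lt_neqAle eq_sym E_neq0.
rewrite /rho (max_l (divr_ge0 g0 (ltW E0))).
have [gE|Eg] := leP g E.
  by rewrite min_l ?mulfVK ?gt_eqF // ler_pdivrMr // mul1r.
by rewrite min_r ?mul1r // ler_pdivlMr // mul1r ltW.
Qed.

Lemma rho_balance (P1 P0 E1 E0 del : R) : 0 <= E1 -> 0 <= E0 ->
  P1 - (P0 + E0) <= del <= P1 + E1 - P0 ->
  P1 + rho ((P0 - P1 + del) / E1) * E1 - (P0 + rho ((P1 - P0 - del) / E0) * E0)
  = del.
Proof.
move=> E10 E00 /andP[lo_del del_hi]; have [g0|g0] := leP 0 (P0 - P1 + del).
  rewrite (@rho_div_le0 (P1 - P0 - del)) ?mul0r ?rho_divK ?min_l //; lra.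
rewrite (@rho_div_le0 (P0 - P1 + del)) ?mul0r ?rho_divK ?min_l //; lra.
Qed.

Lemma rho_balance_lt (P1 P0 E1 E0 del : R) : 0 <= E1 -> 0 <= E0 ->
  del < P1 - (P0 + E0) ->
  P1 + rho ((P0 - P1 + del) / E1) * E1 - (P0 + rho ((P1 - P0 - del) / E0) * E0)
  = P1 - (P0 + E0).
Proof.
move=> E10 E00 del_lo.
rewrite (@rho_div_le0 (P0 - P1 + del)) ?mul0r ?rho_divK ?min_r //; lra.
Qed.
End rho.

Section fair_threshold.
Context {dT : measure_display} {T : measurableType dT} {R : realType}.
Variables (mu : bool -> probability T R) (eta : bool -> T -> R) (p : bool -> R).
Hypothesis p_pos : forall a, 0 < p a.
Hypothesis eta_meas : forall a, measurable_fun setT (eta a).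

Local Notation D := (Dminus mu eta p).
Local Notation Dp := (Dplus mu eta p).

Lemma Dminus_nonincreasing : {homo D : s t / s <= t >-> t <= s}.
Proof.
have div_le a s t : s <= t -> s / (2 * p a) <= t / (2 * p a).
  by move=> st; rewrite ler_wpM2r // invr_ge0 mulr_ge0 // ltW.
move=> s t st; rewrite /Dminus /prb; apply: lerB; apply: fine_measure_le;
  do ?[exact: measurable_gtr|exact: measurable_ger]; move=> x /=.
- by apply: le_lt_trans; rewrite lerD2l div_le.
- by apply: le_trans; rewrite lerD2l lerN2 div_le.
Qed.

Let e_gt0 a : 0 < (2 * p a)^-1.
Proof. by rewrite invr_gt0 mulr_gt0. Qed.

Lemma Dminus_cvg_right t : D (t + n.+1%:R^-1) @[n --> \oo] --> D t.
Proof.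
rewrite /Dminus /prb; apply: cvgB.
- under eq_fun do rewrite mulrDl addrA [_^-1 / _]mulrC.
  exact: cvg_fine_measure_gtr_right.
- under eq_fun do rewrite mulrDl opprD addrA [_^-1 / _]mulrC.
  exact: cvg_fine_measure_ger_left.
Qed.

Lemma Dminus_cvg_left t : D (t - n.+1%:R^-1) @[n --> \oo] --> Dp t.
Proof.
rewrite /Dminus /Dplus /prb; apply: cvgB.
- under eq_fun do rewrite mulrBl addrA [_^-1 / _]mulrC.
  exact: cvg_fine_measure_gtr_left.
- under eq_fun do rewrite mulrBl opprD opprK addrA [_^-1 / _]mulrC.
  exact: cvg_fine_measure_ger_right.
Qed.

Variable delta : R.
Local Notation pip a := (pi_plus mu eta p delta a).
Local Notation pie a := (pi_eq mu eta p delta a).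

Lemma Dminus_tstar :
  D (tstar mu eta p delta) = pip true - (pip false + pie false).
Proof. by rewrite /Dminus /pi_plus /pi_eq /Tstar /prb fine_measure_ger. Qed.

Lemma Dplus_tstar :
  Dp (tstar mu eta p delta) = pip true + pie true - pip false.
Proof. by rewrite /Dplus /pi_plus /pi_eq /Tstar /prb fine_measure_ger. Qed.

Lemma DDP_f_star : DDP mu (f_star mu eta p delta) =
  (pip true + tau_star mu eta p delta true * pie true
   - (pip false + tau_star mu eta p delta false * pie false))%:E.
Proof.
have eq_set a : [set x | eta a x == Tstar mu eta p delta a] =
                [set x | eta a x = Tstar mu eta p delta a].
  by apply/seteqP; split=> x /= /eqP.
rewrite /DDP /f_star !integral_indicator_comb ?eq_set ?rho_ge0 //;
  exact: measurable_gtr || exact: measurable_eqr.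
Qed.

Hypothesis p_le1 : forall a, p a <= 1.
Hypothesis eta_range : forall a x, 0 <= eta a x <= 1.

(* Since p <= 1, both thresholds at t = 2 lie outside [0, 1]. *)
Lemma Dminus2 : D 2 = -1.
Proof.
have thr_ge1 a : 1 <= 2 / (2 * p a).
  by rewrite ler_pdivlMr ?mulr_gt0 // mul1r; have := p_le1 a; lra.
rewrite /Dminus.
have -> : [set x | 1/2 + 2 / (2 * p true) < eta true x] = set0.
  apply/seteqP; split=> x //=.
  by have := thr_ge1 true; have := eta_range true x; move=> /andP[_]; lra.
have -> : [set x | 1/2 - 2 / (2 * p false) <= eta false x] = setT.
  apply/seteqP; split=> x //= _.
  by have := thr_ge1 false; have := eta_range false x; move=> /andP[+ _]; lra.
by rewrite /prb measure0 probability_setT /= sub0r.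
Qed.

Lemma tstar_bracket : 0 <= delta -> delta < D 0 ->
  D (tstar mu eta p delta) <= delta <= Dp (tstar mu eta p delta).
Proof.
move=> delta_ge0 delta_lt; pose S := [set t | D t < delta].
have S2 : S 2 by rewrite /S /= Dminus2; lra.
have S_lb : lbound S 0.
  move=> t St; rewrite leNgt; apply/negP => t_lt0.
  by have := Dminus_nonincreasing _ _ (ltW t_lt0); rewrite /S /= in St; lra.
have S_inf : has_inf S by split; [exists 2 | exists 0].
rewrite /tstar delta_lt -/S; apply/andP; split.
- apply: (cvgr_to_le (Dminus_cvg_right (inf S))); apply: nearW => n.
  have n_gt0 : 0 < n.+1%:R^-1 :> R by rewrite invr_gt0 ltr0Sn.
  have [s Ss s_lt] := inf_adherent n_gt0 S_inf.
  exact/ltW/(le_lt_trans (Dminus_nonincreasing _ _ (ltW s_lt))).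
- apply: (cvgr_to_ge (Dminus_cvg_left (inf S))); apply: nearW => n.
  rewrite leNgt; apply/negP => Sn; have := ge_inf S_inf.2 Sn.
  by rewrite leNgt ltrBlDr ltrDl invr_gt0 ltr0Sn.
Qed.

End fair_threshold.

Theorem proposition5p1 (R : realType) (d : nat)
  (mu : bool -> probability (Rd R d) R)
  (eta : bool -> Rd R d -> R) (p : bool -> R)
  (p_pos : forall a, 0 < p a)
  (p_sum : p false + p true = 1)
  (eta_meas : forall a, measurable_fun setT (eta a))
  (eta_range : forall a x, 0 <= eta a x <= 1)
  (standing : Dplus mu eta p 0 >= - Dminus mu eta p 0)
  (delta : R) (delta_ge0 : 0 <= delta) :
  (delta < Dminus mu eta p 0 ->
     DDP mu (f_star mu eta p delta) = delta%:E) /\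
  (Dminus mu eta p 0 <= 0 ->
     DDP mu (f_star mu eta p delta) = 0%E) /\
  (0 < Dminus mu eta p 0 <= delta ->
     DDP mu (f_star mu eta p delta) = (Dminus mu eta p 0)%:E).
Proof.
have p_le1 a : p a <= 1 by have := p_pos (~~ a); case: a p_sum; lra.
have pi_eq_ge0 a : 0 <= pi_eq mu eta p delta a by apply/fine_ge0/measure_ge0.
have Dm := Dminus_tstar mu eta p eta_meas delta.
have Dp := Dplus_tstar mu eta p eta_meas delta.
rewrite DDP_f_star // /tau_star /delta_tilde.
have tstar0 : Dminus mu eta p 0 <= delta -> tstar mu eta p delta = 0.
  by rewrite /tstar leNgt => /negPf ->.
split; [move=> lt_D0 | split => [le_D0 | /andP[D0_gt0 le_D0]]].
- rewrite lt_D0 rho_balance //.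
  have := tstar_bracket mu eta p p_pos eta_meas delta p_le1 eta_range.
  by rewrite Dm Dp; apply.
- have := Dm; have := Dp; rewrite tstar0 ?(le_trans le_D0) // => Dp0 Dm0.
  rewrite ifF ?rho_balance //; lra.
- have := Dm; rewrite tstar0 // => Dm0.
  rewrite ifN -?leNgt // rho_balance_lt //; last lra.
  by rewrite Dm0.
Qed.
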